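(* Every finite $2$-group $G$ is mixable, and $\mathrm{mixlen}(G)=\log_2|G|$.
   Context: For a finite group $G$, a random subproduct is a random element $g_1^{\epsilon_1}\cdots g_k^{\epsilon_k}$ where $g_1,\dots,g_k\in G$ are fixed and $\epsilon_1,\dots,\epsilon_k$ are independent Bernoulli random variables with $\epsilon_i\sim\mathrm{Ber}(p_i)$, $p_i\in[0,1]$. $G$ is called mixable if some random subproduct is distributed exactly uniformly on $G$; the sequence $(g_1,p_1),\dots,(g_k,p_k)$ is then a mixing sequence of length $k$. The mixing length $\mathrm{mixlen}(G)$ is the minimal length of a mixing sequence of $G$. *)

From mathcomp Require Import all_boot all_order all_algebra all_fingroup all_solvable.
From mathcomp Require Import reals.
Set Implicit Arguments. Unset Strict Implicit. Unset Printing Implicit Defensive.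
Import GRing.Theory Num.Theory.

(* Probability that the random subproduct g_0^{e_0} ... g_{k-1}^{e_{k-1}},
   with e_i ~ Ber(p_i) independent, equals x. *)
Definition subprod (gT : finGroupType) (k : nat) (g : 'I_k -> gT)
  (e : {ffun 'I_k -> bool}) : gT :=
  (\prod_(i < k) (if e i then g i else 1))%g.

Definition subprod_prob (R : realType) (gT : finGroupType) (k : nat)
  (g : 'I_k -> gT) (p : 'I_k -> R) (x : gT) : R :=
  (\sum_(e : {ffun 'I_k -> bool} | subprod g e == x)
     \prod_(i < k) (if e i then p i else 1 - p i))%R.

Definition mixing_seq (R : realType) (gT : finGroupType) (G : {group gT})
  (k : nat) (g : 'I_k -> gT) (p : 'I_k -> R) : Prop :=
  [/\ (forall i, g i \in G),
      (forall i, (0 <= p i <= 1)%R) &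
      (forall x, x \in G -> subprod_prob g p x = ((#|G|%:R)^-1)%R :> R)].

Definition has_mixing_seq_of_length (R : realType) (gT : finGroupType)
  (G : {group gT}) (k : nat) : Prop :=
  exists (g : 'I_k -> gT) (p : 'I_k -> R), mixing_seq G g p.

Definition mixable (R : realType) (gT : finGroupType) (G : {group gT}) : Prop :=
  exists k, has_mixing_seq_of_length R G k.

Definition is_mixlen (R : realType) (gT : finGroupType) (G : {group gT})
  (n : nat) : Prop :=
  has_mixing_seq_of_length R G n /\
  (forall k, has_mixing_seq_of_length R G k -> (n <= k)%N).

From mathcomp Require Import all_boot all_order all_algebra all_fingroup all_solvable.
From mathcomp Require Import reals.
Set Implicit Arguments.
Unset Strict Implicit.
Unset Printing Implicit Defensive.
Import GRing.Theory Num.Theory.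

(* A group G of order 2^n has a subgroup L of order 2^(n-1); choosing g_0
   outside L and, inductively, g_1, ..., g_(n-1) for L, every element of G is
   the subproduct g_0^e_0 ... g_(n-1)^e_(n-1) for exactly one e, because L and
   g_0 L are the two cosets of L.  With all p_i = 1/2 each of the 2^n
   outcomes e has probability 2^-n = 1/|G|, which gives a mixing sequence of
   length n.  Conversely, a subproduct of length k takes at most 2^k values,
   and a mixing sequence must reach every element of G, so 2^k >= |G|. *)

Section SubProducts.
Variable gT : finGroupType.
Implicit Types (G L : {group gT}) (a : gT).

Lemma eq_subprod k (g1 g2 : 'I_k -> gT) e :
  g1 =1 g2 -> subprod g1 e = subprod g2 e.
Proof. by move=> eq_g; apply: eq_bigr => i _; rewrite eq_g. Qed.

Lemma subprod_ord_recl m (g : 'I_m.+1 -> gT) e :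
  subprod g e = ((if e ord0 then g ord0 else 1) *
     subprod (fun i => g (lift ord0 i)) [ffun i => e (lift ord0 i)])%g.
Proof.
rewrite /subprod big_ord_recl; congr (_ * _)%g.
by apply: eq_bigr => i _; rewrite ffunE.
Qed.

Lemma group_subprod G k (g : 'I_k -> gT) e :
  (forall i, g i \in G) -> subprod g e \in G.
Proof.
move=> gG; apply: group_prod => i _.
by case: ifP => _; [exact: gG | exact: group1].
Qed.

Lemma subprod_imset_sub G k (g : 'I_k -> gT) :
  (forall i, g i \in G) -> [set subprod g e | e : {ffun 'I_k -> bool}] \subset G.
Proof. by move=> gG; apply/subsetP => _ /imsetP[e _ ->]; apply: group_subprod. Qed.

Lemma card_subprod_imset k (g : 'I_k -> gT) :
  #|[set subprod g e | e : {ffun 'I_k -> bool}]| <= 2 ^ k.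
Proof.
by apply: leq_trans (leq_imset_card _ _) _; rewrite card_ffun card_bool card_ord.
Qed.

Lemma mul_coset_rep_inj L a b1 b2 x1 x2 :
    a \notin L -> x1 \in L -> x2 \in L ->
  ((if b1 then a else 1) * x1 = (if b2 then a else 1) * x2)%g ->
  b1 = b2 /\ x1 = x2.
Proof.
move=> aL x1L x2L; case: b1; case: b2; rewrite ?mul1g.
- by move/mulgI.
- by move=> E; case/negP: aL; rewrite -(mulgK x1 a) E groupM ?groupV.
- by move=> E; case/negP: aL; rewrite -(mulgK x2 a) -E groupM ?groupV.
- by [].
Qed.

Lemma subprod_cons_inj L m (h : 'I_m -> gT) a :
    (forall i, h i \in L) -> a \notin L -> injective (subprod h) ->
  injective (subprod (fun i : 'I_m.+1 =>
                        if unlift ord0 i is Some j then h j else a)).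
Proof.
move=> hL aL h_inj e1 e2.
have tail_h : (fun i => if unlift ord0 (lift ord0 i) is Some j then h j else a) =1 h.
  by move=> i; rewrite liftK.
rewrite !subprod_ord_recl unlift_none 2!(eq_subprod _ tail_h) => E.
have [E0 /h_inj/ffunP Etail] :=
  mul_coset_rep_inj aL (group_subprod _ hL) (group_subprod _ hL) E.
apply/ffunP => i; case: (unliftP ord0 i) => [j ->|->] //.
by have := Etail j; rewrite !ffunE.
Qed.

Lemma subprod_basis_exp2 n G : #|G| = 2 ^ n ->
  exists g : 'I_n -> gT, (forall i, g i \in G) /\ injective (subprod g).
Proof.
elim: n G => [|m IH] G cardG.
  exists (fun=> 1%g); split=> [i|e1 e2 _]; first exact: group1.
  by apply/ffunP => -[].
have pG : (2.-group G)%g by rewrite /pgroup cardG pnatX pnat_id.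
have [L [sLG _ cardL]] : exists L : {group gT}, [/\ L \subset G, (L <| G)%g & #|L| = 2 ^ m].
  by apply: normal_pgroup pG (normal_refl G) _; rewrite cardG pfactorK.
have [h [hL h_inj]] := IH L cardL.
have [a aG aL] : exists2 a, a \in G & a \notin L.
  apply/subsetPn; apply: contraL (ltnSn m) => /subset_leq_card.
  by rewrite cardG cardL leq_exp2l // -ltnNge.
exists (fun i => if unlift ord0 i is Some j then h j else a); split.
  by move=> i; case: unliftP => [j _|_] //; apply: (subsetP sLG).
exact: subprod_cons_inj hL aL h_inj.
Qed.

Lemma subprod_imset_basis G n (g : 'I_n -> gT) :
    (forall i, g i \in G) -> injective (subprod g) -> #|G| = 2 ^ n ->
  [set subprod g e | e : {ffun 'I_n -> bool}] = G.
Proof.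
move=> gG g_inj cardG; apply/eqP; rewrite eqEcard subprod_imset_sub //=.
by rewrite card_imset // card_ffun card_bool card_ord cardG.
Qed.

End SubProducts.

Section MixingSequences.
Variables (R : realType) (gT : finGroupType) (G : {group gT}).
Local Open Scope ring_scope.

Lemma mixing_seq_half n (g : 'I_n -> gT) :
    (forall i, g i \in G) -> injective (subprod g) -> #|G| = (2 ^ n)%N ->
  mixing_seq G g (fun=> 2^-1 : R).
Proof.
move=> gG g_inj cardG; split=> // [i|x].
  by rewrite invr_ge0 ler0n invf_le1 ?ltr0n ?ler1n.
rewrite -{1}(subprod_imset_basis gG g_inj cardG) => /imsetP[e _ ->].
rewrite /subprod_prob (eq_bigl (pred1 e)) => [|e']; last by rewrite /= inj_eq.
have half_compl : 1 - 2^-1 = 2^-1 :> R by rewrite {1}(splitr 1) mul1r addrK.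
rewrite big_pred1_eq (eq_bigr (fun=> 2^-1)) => [|i _]; last by case: ifP; rewrite ?half_compl.
by rewrite prodr_const card_ord cardG natrX exprVn.
Qed.

Lemma mixing_seq_card_leq k (g : 'I_k -> gT) (p : 'I_k -> R) :
  mixing_seq G g p -> (#|G| <= 2 ^ k)%N.
Proof.
case=> _ _ unif; apply: leq_trans (card_subprod_imset g).
apply/subset_leq_card/subsetP => x xG; move: (unif x xG); rewrite /subprod_prob.
case: (pickP (fun e => subprod g e == x)) => [e /eqP <- _|no_e].
  exact: imset_f.
by rewrite big_pred0 // => /esym/eqP; rewrite invr_eq0 pnatr_eq0 eqn0Ngt cardG_gt0.
Qed.

End MixingSequences.

Theorem mainTheorem1 (R : realType) (gT : finGroupType) (G : {group gT}) :
  (2.-group G)%g -> mixable R G /\ is_mixlen R G (logn 2 #|G|).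
Proof.
move=> pG; have cardG := card_pgroup pG.
have [g [gG g_inj]] := subprod_basis_exp2 cardG.
have mixG : has_mixing_seq_of_length R G (logn 2 #|G|).
  by exists g, (fun=> 2^-1)%R; apply: mixing_seq_half.
split; first by exists (logn 2 #|G|).
split=> // k [g' [p' /mixing_seq_card_leq]].
by rewrite {1}cardG leq_exp2l.
Qed.
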